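(* Suppose $A$ is a finite set and $E_1,E_2,\ldots,E_\ell$ are $\ell>1$ subsets of $A$ such that: (i) for all $1\leq i<\ell$, $E_i\not\subseteq E_{i+1}$ and $E_{i+1}\not\subseteq E_i$; (ii) for all $a\in A$ and $1\leq i<j\leq\ell$, if $a\in E_i\cap E_j$ then $a\in E_k$ for all $i\leq k\leq j$. Then $\ell\leq|A|$. *)

From mathcomp Require Import all_boot.
Set Implicit Arguments.
Unset Strict Implicit.
Unset Printing Implicit Defensive.

From mathcomp Require Import all_boot.

Set Implicit Arguments.
Unset Strict Implicit.
Unset Printing Implicit Defensive.

(* Pick for each i an element a_i of E_i that leaves the chain right after i
   (for the last index, any element of E_l not in E_(l-1) will do).  By the
   interval condition a_i lies in no later E_j, so i |-> a_i is injective. *)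

Section IntervalChain.

Variables (A : finType) (l : nat) (E : nat -> {set A}).

Hypothesis interval_mem : forall (a : A) i j, i < j -> j < l ->
  a \in E i -> a \in E j -> forall k, i <= k -> k <= j -> a \in E k.

Definition leaves_after (i : nat) (a : A) :=
  (a \in E i) && ((i.+1 < l) ==> (a \notin E i.+1)).

Lemma leaves_after_notin_later i j a :
  i < j -> j < l -> leaves_after i a -> a \notin E j.
Proof.
move=> lt_ij lt_jl /andP[Ei]; rewrite (leq_ltn_trans lt_ij lt_jl) /=.
apply: contra => Ej.
exact: (interval_mem lt_ij lt_jl Ei Ej (leqnSn i) lt_ij).
Qed.

Lemma leaves_after_inj (f : 'I_l -> A) :
  (forall i : 'I_l, leaves_after i (f i)) -> injective f.
Proof.
move=> hf.
have lt_neq (i j : 'I_l) : i < j -> f i != f j.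
  move=> lt_ij; have := leaves_after_notin_later lt_ij (ltn_ord j) (hf i).
  by apply: contraNneq => ->; case/andP: (hf j).
move=> i j eq_f; apply: val_inj.
by case: (ltngtP i j) => // lt; move: (lt_neq _ _ lt); rewrite eq_f eqxx.
Qed.

End IntervalChain.

Lemma exists_leaves_after (A : finType) (l : nat) (E : nat -> {set A}) :
  1 < l ->
  (forall i, i.+1 < l -> ~~ (E i \subset E i.+1) /\ ~~ (E i.+1 \subset E i)) ->
  forall i, i < l -> exists a, leaves_after l E i a.
Proof.
move=> lt1l incomparable i lt_il; rewrite /leaves_after.
case: (ltnP i.+1 l) => [lt_Si | le_Si].
  have [/subsetPn[a Ei notEi] _] := incomparable i lt_Si.
  by exists a; rewrite Ei notEi.
have i_gt0 : 0 < i by rewrite -ltnS (leq_trans lt1l le_Si).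
have lt_Spred : i.-1.+1 < l by rewrite prednK.
have [_ /subsetPn[a Ei _]] := incomparable i.-1 lt_Spred.
by exists a; rewrite -(prednK i_gt0) Ei prednK // ltnNge le_Si.
Qed.

Theorem lemma18 (A : finType) (l : nat) (E : nat -> {set A}) :
  1 < l ->
  (forall i, i.+1 < l -> ~~ (E i \subset E i.+1) /\ ~~ (E i.+1 \subset E i)) ->
  (forall (a : A) i j, i < j -> j < l -> a \in E i -> a \in E j ->
     forall k, i <= k -> k <= j -> a \in E k) ->
  l <= #|A|.
Proof.
move=> lt1l incomparable interval_mem.
have [f hf] := fin_all_exists (fun i : 'I_l =>
  exists_leaves_after lt1l incomparable (ltn_ord i)).
rewrite -[l in l <= _]card_ord.
exact: leq_card (leaves_after_inj interval_mem hf).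
Qed.
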